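(* Fix an integer $d\geq 3$ and $\rho<1$. There exist constants $C,c>0$ and a function $\epsilon(n)\to 0$ as $n\to\infty$ (all depending only on $d,\rho$) such that the following holds for all sufficiently large $n$. Let $G_n$ be a $d$-regular graph on $n$ vertices whose transition matrix has all eigenvalues other than $1$ of absolute value at most $\rho$, let $v\in G_n$, and let $G$ be obtained by adding a new vertex $v'$ and the edge $\{v,v'\}$. Then for every vertex $u\neq v'$ there is a set of vertices $S_u$ with $|S_u|\geq (1-\epsilon(n))n$ such that for every $w\in S_u$ and every integer $t$ with $C\log n\leq t\leq n$, $$\mathbb{P}_u(X_t=w,\ \tau_{v'}\geq t)\geq \frac{c}{n}.$$
   Context: $(X_t)$ is simple random walk on $G$, $\mathbb{P}_u$ its law with $X_0=u$, and $\tau_{v'}=\min\{t\geq1:X_t=v'\}$. *)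

From Stdlib Require Import Reals Lra Lia List.
Open Scope R_scope.

(* Vertices of G_n are 0, ..., n-1; the new vertex v' of G is n. *)

Fixpoint rsum (n : nat) (f : nat -> R) : R :=
  match n with
  | O => 0
  | S k => rsum k f + f k
  end.

Definition ncount (m : nat) (P : nat -> bool) : nat :=
  length (filter P (seq 0 m)).

Definition is_d_regular_simple (n d : nat) (adj : nat -> nat -> bool) : Prop :=
  (forall x y, (x < n)%nat -> (y < n)%nat -> adj x y = adj y x) /\
  (forall x, (x < n)%nat -> adj x x = false) /\
  (forall x, (x < n)%nat -> ncount n (adj x) = d).

Definition transGn (n d : nat) (adj : nat -> nat -> bool) (x y : nat) : R :=
  if adj x y then / INR d else 0.

Definition mat_apply (n : nat) (P : nat -> nat -> R) (f : nat -> R) (x : nat) : R :=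
  rsum n (fun y => P x y * f y).

(* "All eigenvalues other than 1 have absolute value at most rho":
   the eigenvalue 1 is simple (its eigenspace is the constants) and every
   other eigenvalue lambda satisfies |lambda| <= rho.  The matrix is real
   symmetric, so all eigenvalues are real with real eigenvectors. *)
Definition spectral_gap (n d : nat) (adj : nat -> nat -> bool) (rho : R) : Prop :=
  let P := transGn n d adj in
  (forall f : nat -> R,
      (forall x, (x < n)%nat -> mat_apply n P f x = f x) ->
      forall x y, (x < n)%nat -> (y < n)%nat -> f x = f y) /\
  (forall (lam : R) (f : nat -> R),
      (exists x, (x < n)%nat /\ f x <> 0) ->
      (forall x, (x < n)%nat -> mat_apply n P f x = lam * f x) ->
      lam <> 1 -> Rabs lam <= rho).

Definition adjG (n : nat) (adj : nat -> nat -> bool) (v x y : nat) : bool :=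
  (Nat.ltb x n && Nat.ltb y n && adj x y)
  || (Nat.eqb x v && Nat.eqb y n) || (Nat.eqb x n && Nat.eqb y v).

Definition degG (n : nat) (adj : nat -> nat -> bool) (v x : nat) : nat :=
  ncount (S n) (adjG n adj v x).

Definition transG (n : nat) (adj : nat -> nat -> bool) (v x y : nat) : R :=
  if adjG n adj v x y then / INR (degG n adj v x) else 0.

(* killed (v' = n) walk:
   walk_avoid n adj v u t w = P_u(X_t = w, X_s <> n for all 0 <= s <= t-1).
   For u <> n this is P_u(X_t = w, tau_{v'} >= t), with
   tau_{v'} = min{s >= 1 : X_s = v'}. *)
Fixpoint walk_avoid (n : nat) (adj : nat -> nat -> bool) (v u t w : nat) : R :=
  match t with
  | O => if Nat.eqb w u then 1 else 0
  | S s => rsum n (fun x => walk_avoid n adj v u s x * transG n adj v x w)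
  end.

From Stdlib Require Import Reals Lra Lia List Psatz Classical.
Open Scope R_scope.

(* Conditionally on the path of the walk on G_n, the walk on G differs only in that every step
   out of v stays in G_n with probability d/(d+1).  Hence P_u(X_t = w, tau_{v'} >= t) is the
   G_n-expectation of (d/(d+1))^(number of visits to v before t) on {X_t = w}, and Jensen's
   inequality bounds it below by p exp (- L h / p), where p = P^t(u, w), L = ln ((d+1)/d) and h is
   the expected number of such visits on {X_t = w}.  The spectral gap gives
   |P^t(u, w) - 1/n| <= rho^t, so p >= 1/(2n) once t >= C log n, and
   h = sum_{s<t} P^s(u, v) P^(t-s)(v, w) = O(1/n) for t <= n.  Thus S_u can be all of G_n. *)

(** * Finite sums *)

Lemma rsum_ext : forall n f g, (forall i, (i < n)%nat -> f i = g i) -> rsum n f = rsum n g.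
Proof.
  induction n; intros f g H; simpl; auto.
  rewrite (IHn f g), (H n) by (auto; intros; apply H; lia). reflexivity.
Qed.

Lemma rsum_plus : forall n f g, rsum n (fun i => f i + g i) = rsum n f + rsum n g.
Proof. induction n; intros; simpl; [lra | rewrite IHn; lra]. Qed.

Lemma rsum_minus : forall n f g, rsum n (fun i => f i - g i) = rsum n f - rsum n g.
Proof. induction n; intros; simpl; [lra | rewrite IHn; lra]. Qed.

Lemma rsum_scal_l : forall n c f, rsum n (fun i => c * f i) = c * rsum n f.
Proof. induction n; intros; simpl; [lra | rewrite IHn; lra]. Qed.

Lemma rsum_scal_r : forall n c f, rsum n (fun i => f i * c) = rsum n f * c.
Proof. induction n; intros; simpl; [lra | rewrite IHn; lra]. Qed.

Lemma rsum_const : forall n c, rsum n (fun _ => c) = INR n * c.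
Proof. induction n; intros; cbn [rsum]; [simpl; lra | rewrite IHn, S_INR; lra]. Qed.

Lemma rsum_0 : forall n, rsum n (fun _ => 0) = 0.
Proof. intros. rewrite rsum_const. ring. Qed.

Lemma rsum_le : forall n f g, (forall i, (i < n)%nat -> f i <= g i) -> rsum n f <= rsum n g.
Proof.
  induction n; intros f g H; simpl; [lra |].
  assert (rsum n f <= rsum n g) by (apply IHn; intros; apply H; lia).
  assert (f n <= g n) by (apply H; lia). lra.
Qed.

Lemma rsum_nonneg : forall n f, (forall i, (i < n)%nat -> 0 <= f i) -> 0 <= rsum n f.
Proof. intros. rewrite <- (rsum_0 n). apply rsum_le. auto. Qed.

Lemma rsum_term_le : forall n f i, (forall j, (j < n)%nat -> 0 <= f j) -> (i < n)%nat ->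
  f i <= rsum n f.
Proof.
  induction n; intros f i H Hi; [lia |]. simpl.
  destruct (Nat.eq_dec i n) as [-> | Hin].
  - assert (0 <= rsum n f) by (apply rsum_nonneg; intros; apply H; lia). lra.
  - assert (f i <= rsum n f) by (apply IHn; [intros; apply H | ]; lia).
    assert (0 <= f n) by (apply H; lia). lra.
Qed.

Lemma rsum_swap : forall n m (f : nat -> nat -> R),
  rsum n (fun i => rsum m (fun j => f i j)) = rsum m (fun j => rsum n (fun i => f i j)).
Proof.
  induction n; intros; simpl; [rewrite rsum_0; auto |].
  rewrite IHn, <- rsum_plus. reflexivity.
Qed.

Lemma rsum_delta : forall n i g, (i < n)%nat ->
  rsum n (fun j => if Nat.eqb j i then g j else 0) = g i.
Proof.
  induction n; intros i g H; [lia |]. simpl.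
  destruct (Nat.eq_dec i n) as [-> | Hin].
  - rewrite Nat.eqb_refl, (rsum_ext n _ (fun _ => 0)), rsum_0; [lra |].
    intros j Hj. destruct (Nat.eqb_spec j n); [lia | auto].
  - rewrite IHn by lia. destruct (Nat.eqb_spec n i); [lia | lra].
Qed.

Lemma rsum_indicator : forall n (p : nat -> bool) c,
  rsum n (fun y => if p y then c else 0) = INR (ncount n p) * c.
Proof.
  unfold ncount. induction n; intros; cbn [rsum]; [simpl; ring |].
  rewrite IHn, seq_S, filter_app, length_app, plus_INR.
  simpl. destruct (p n); simpl; ring.
Qed.

Lemma ncount_S : forall n p, ncount (S n) p = (ncount n p + if p n then 1 else 0)%nat.
Proof.
  intros. unfold ncount. rewrite seq_S, filter_app, length_app. simpl. destruct (p n); reflexivity.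
Qed.

Lemma ncount_ext : forall n p q, (forall i, (i < n)%nat -> p i = q i) -> ncount n p = ncount n q.
Proof.
  intros n p q H. unfold ncount. f_equal. apply filter_ext_in.
  intros i Hi. apply in_seq in Hi. apply H. lia.
Qed.

Lemma ncount_ltb : forall n, ncount (S n) (fun w => Nat.ltb w n) = n.
Proof.
  intros. rewrite ncount_S, Nat.ltb_irrefl, (ncount_ext n _ (fun _ => true))
    by (intros; apply Nat.ltb_lt; auto).
  unfold ncount. rewrite forallb_filter_id, length_seq; [lia |].
  apply forallb_forall. auto.
Qed.

Lemma rsum_cauchy_schwarz : forall n p a b, (forall i, (i < n)%nat -> 0 <= p i) ->
  (rsum n (fun i => p i * a i * b i))^2
  <= rsum n (fun i => p i * a i * a i) * rsum n (fun i => p i * b i * b i).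
Proof.
  intros n p a b Hp.
  set (A := rsum n (fun i => p i * a i * a i)).
  set (B := rsum n (fun i => p i * b i * b i)).
  set (S := rsum n (fun i => p i * a i * b i)).
  assert (Hquad : forall x, 0 <= A * x ^ 2 - 2 * x * S + B).
  { intros x.
    replace (A * x ^ 2 - 2 * x * S + B) with (rsum n (fun i => p i * (a i * x - b i) ^ 2)).
    - apply rsum_nonneg. intros i Hi. apply Rmult_le_pos; [auto | apply pow2_ge_0].
    - rewrite (rsum_ext n _ (fun i => (p i * a i * a i) * x ^ 2
                                     - (2 * x * (p i * a i * b i) - p i * b i * b i)))
        by (intros; ring).
      rewrite !rsum_minus, rsum_scal_r, rsum_scal_l. fold A B S. ring. }
  assert (HA : 0 <= A) by (apply rsum_nonneg; intros i Hi; specialize (Hp i Hi); nra).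
  destruct (Rle_lt_or_eq_dec _ _ HA) as [HA0 | HA0].
  - specialize (Hquad (S / A)).
    replace (A * (S / A) ^ 2 - 2 * (S / A) * S + B) with (B - S ^ 2 / A) in Hquad
      by (field; lra).
    apply (Rmult_le_compat_l A) in Hquad; [| lra].
    replace (A * (B - S ^ 2 / A)) with (A * B - S ^ 2) in Hquad by (field; lra). lra.
  - (* with A = 0 the quadratic is affine, so nonnegative only if S = 0 *)
    destruct (Req_dec S 0) as [-> | HS]; [rewrite <- HA0; lra |].
    specialize (Hquad ((B + 1) / (2 * S))). rewrite <- HA0 in Hquad.
    replace (0 * ((B + 1) / (2 * S)) ^ 2 - 2 * ((B + 1) / (2 * S)) * S + B) with (-1)
      in Hquad by (field; auto). lra.
Qed.

(** * Quadratic forms and eigenvectors *)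

Definition qform (k : nat) (Q : nat -> nat -> R) (f : nat -> R) : R :=
  rsum k (fun i => f i * rsum k (fun j => Q i j * f j)).

Definition sqnorm (k : nat) (f : nat -> R) : R := rsum k (fun i => f i * f i).

Definition schur (k : nat) (Q : nat -> nat -> R) (i j : nat) : R :=
  Q i j - Q i k * Q k j / Q k k.

Lemma sqnorm_nonneg : forall k f, 0 <= sqnorm k f.
Proof. intros. apply rsum_nonneg. intros. nra. Qed.

Lemma sqnorm_ext : forall k f g, (forall i, (i < k)%nat -> f i = g i) -> sqnorm k f = sqnorm k g.
Proof. intros. apply rsum_ext. intros. rewrite H; auto. Qed.

Lemma qform_ext : forall k Q f g, (forall i, (i < k)%nat -> f i = g i) -> qform k Q f = qform k Q g.
Proof.
  intros. apply rsum_ext. intros. rewrite H by auto. f_equal.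
  apply rsum_ext. intros. rewrite H; auto.
Qed.

Lemma qform_delta : forall k Q i, (i < k)%nat ->
  qform k Q (fun j => if Nat.eqb j i then 1 else 0) = Q i i.
Proof.
  intros. unfold qform.
  rewrite (rsum_ext k _ (fun x => if Nat.eqb x i then Q x i else 0));
    [apply (rsum_delta k i (fun x => Q x i)); auto |].
  intros x Hx. rewrite (rsum_ext k _ (fun y => if Nat.eqb y i then Q x y else 0)).
  - rewrite rsum_delta by auto. destruct (Nat.eqb x i); lra.
  - intros y Hy. destruct (Nat.eqb y i); lra.
Qed.

Lemma sqnorm_delta : forall k i, (i < k)%nat ->
  sqnorm k (fun j => if Nat.eqb j i then 1 else 0) = 1.
Proof.
  intros. unfold sqnorm.
  rewrite (rsum_ext k _ (fun j => if Nat.eqb j i then 1 else 0)).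
  - apply (rsum_delta k i (fun _ => 1)); auto.
  - intros j Hj. destruct (Nat.eqb j i); lra.
Qed.

Lemma qform_S : forall k Q f, (forall i j, (i < S k)%nat -> (j < S k)%nat -> Q i j = Q j i) ->
  qform (S k) Q f = qform k Q f + 2 * f k * rsum k (fun j => Q k j * f j) + Q k k * f k * f k.
Proof.
  intros k Q f HS. unfold qform. cbn [rsum].
  rewrite (rsum_ext k (fun i => f i * (rsum k (fun j => Q i j * f j) + Q i k * f k))
             (fun i => f i * rsum k (fun j => Q i j * f j) + f k * (Q k i * f i))).
  - rewrite rsum_plus, rsum_scal_l. ring.
  - intros. rewrite (HS i k) by lia. ring.
Qed.

Section PSDForm.

Variables (k : nat) (Q : nat -> nat -> R).
Hypothesis Qsym : forall i j, (i < S k)%nat -> (j < S k)%nat -> Q i j = Q j i.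
Hypothesis Qpsd : forall f, 0 <= qform (S k) Q f.

Lemma psd_zero_diag_row : Q k k = 0 -> forall i, (i < k)%nat -> Q k i = 0.
Proof.
  intros Hkk i Hi. destruct (Req_dec (Q k i) 0) as [| Hki]; auto. exfalso.
  (* the form is affine in the coefficient of e_k, hence unbounded below *)
  set (t := - (Q i i + 1) / (2 * Q k i)).
  set (f := fun j => if Nat.eqb j k then t else if Nat.eqb j i then 1 else 0).
  assert (Hlow : forall j, (j < k)%nat -> f j = if Nat.eqb j i then 1 else 0).
  { intros j Hj. unfold f. destruct (Nat.eqb_spec j k); [lia | auto]. }
  assert (H1 := Qpsd f). rewrite qform_S in H1 by auto.
  rewrite (qform_ext k Q f _ Hlow), qform_delta in H1 by auto.
  rewrite (rsum_ext k (fun j => Q k j * f j) (fun j => if Nat.eqb j i then Q k j else 0)) in H1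
    by (intros j Hj; rewrite Hlow by auto; destruct (Nat.eqb j i); lra).
  rewrite (rsum_delta k i (fun j => Q k j)) in H1 by auto.
  unfold f in H1. rewrite Nat.eqb_refl, Hkk in H1.
  assert (2 * t * Q k i = - (Q i i + 1)) by (unfold t; field; auto). nra.
Qed.

Hypothesis Qkk_pos : 0 < Q k k.

Let beta (f : nat -> R) : R := rsum k (fun j => Q k j * f j).

Let extend (y : nat -> R) (j : nat) : R := if Nat.eqb j k then - beta y / Q k k else y j.

Lemma qform_schur : forall f,
  qform (S k) Q f = qform k (schur k Q) f + Q k k * (f k + beta f / Q k k) ^ 2.
Proof.
  intros f. rewrite qform_S by auto. unfold qform, schur, beta.
  rewrite (rsum_ext k (fun i => f i * rsum k (fun j => (Q i j - Q i k * Q k j / Q k k) * f j))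
    (fun i => f i * rsum k (fun j => Q i j * f j)
              - (rsum k (fun j => Q k j * f j) / Q k k) * (Q k i * f i))).
  - rewrite rsum_minus, rsum_scal_l. field. lra.
  - intros i Hi.
    rewrite (rsum_ext k _ (fun j => Q i j * f j - (Q i k / Q k k) * (Q k j * f j)))
      by (intros; field; lra).
    rewrite rsum_minus, rsum_scal_l, (Qsym i k) by lia. field. lra.
Qed.

Lemma extend_low : forall y i, (i < k)%nat -> extend y i = y i.
Proof. intros. unfold extend. destruct (Nat.eqb_spec i k); [lia | auto]. Qed.

Lemma beta_extend : forall y, beta (extend y) = beta y.
Proof. intros. apply rsum_ext. intros. rewrite extend_low; auto. Qed.

Lemma qform_schur_extend : forall y, qform (S k) Q (extend y) = qform k (schur k Q) y.
Proof.
  intros y. rewrite qform_schur, beta_extend, (qform_ext k _ _ y) by apply extend_low.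
  unfold extend. rewrite Nat.eqb_refl.
  replace (- beta y / Q k k + beta y / Q k k) with 0 by (field; lra). ring.
Qed.

Lemma schur_sym : forall i j, (i < k)%nat -> (j < k)%nat -> schur k Q i j = schur k Q j i.
Proof. intros. unfold schur. rewrite (Qsym i j), (Qsym i k), (Qsym j k) by lia. field. lra. Qed.

Lemma schur_psd : forall y, 0 <= qform k (schur k Q) y.
Proof. intros. rewrite <- qform_schur_extend. apply Qpsd. Qed.

Lemma schur_kernel_extend : forall y,
  (forall i, (i < k)%nat -> rsum k (fun j => schur k Q i j * y j) = 0) ->
  forall i, (i < S k)%nat -> rsum (S k) (fun j => Q i j * extend y j) = 0.
Proof.
  intros y Hker i Hi. cbn [rsum]. unfold extend at 2. rewrite Nat.eqb_refl.
  rewrite (rsum_ext k (fun j => Q i j * extend y j) (fun j => Q i j * y j))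
    by (intros; rewrite extend_low; auto).
  destruct (Nat.eq_dec i k) as [-> | Hik].
  - fold (beta y). field. lra.
  - assert (Hk := Hker i ltac:(lia)). unfold schur in Hk.
    rewrite (rsum_ext k _ (fun j => Q i j * y j - (Q i k / Q k k) * (Q k j * y j))),
      rsum_minus, rsum_scal_l in Hk by (intros; field; lra).
    fold (beta y) in Hk. rewrite <- Hk. field. lra.
Qed.

Lemma beta_sq_le : forall f, (beta f) ^ 2 <= rsum k (fun j => Q k j * Q k j) * sqnorm k f.
Proof.
  intros f. assert (W := rsum_cauchy_schwarz k (fun _ => 1) (fun j => Q k j) f).
  cbv beta in W. unfold beta, sqnorm.
  rewrite (rsum_ext k (fun i => 1 * Q k i * f i) (fun j => Q k j * f j)),
    (rsum_ext k (fun i => 1 * Q k i * Q k i) (fun j => Q k j * Q k j)),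
    (rsum_ext k (fun i => 1 * f i * f i) (fun j => f j * f j)) in W by (intros; ring).
  apply W. intros; lra.
Qed.

Lemma schur_coercive_lift : forall dl, 0 < dl ->
  (forall f, dl * sqnorm k f <= qform k (schur k Q) f) ->
  exists delta, 0 < delta /\ forall f, delta * sqnorm (S k) f <= qform (S k) Q f.
Proof.
  intros dl Hdl Hdom.
  set (a := Q k k) in *.
  set (Bq := rsum k (fun j => Q k j * Q k j)).
  assert (HBa : 0 <= Bq / (a * a)).
  { apply Rmult_le_pos; [apply rsum_nonneg; intros; nra | left; apply Rinv_0_lt_compat; nra]. }
  set (K := 1 + 2 * (Bq / (a * a))).
  set (m := Rmin (dl / K) (a / 2)).
  assert (Hm0 : 0 < m) by (apply Rmin_glb_lt; [apply Rdiv_lt_0_compat |]; unfold K; lra).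
  assert (HmK : m * K <= dl).
  { apply Rle_trans with (dl / K * K); [apply Rmult_le_compat_r; [unfold K; lra | apply Rmin_l] |].
    right. field. unfold K. lra. }
  assert (Hma : m <= a / 2) by apply Rmin_r.
  exists m. split; auto. intros f.
  rewrite qform_schur. fold a.
  set (s := sqnorm k f). set (b := beta f / a). set (u := f k + b).
  assert (Hs : 0 <= s) by apply sqnorm_nonneg.
  specialize (Hdom f). fold s in Hdom.
  assert (Hb2 : b * b <= Bq / (a * a) * s).
  { replace (b * b) with ((beta f) ^ 2 * / (a * a)) by (unfold b; field; lra).
    replace (Bq / (a * a) * s) with (Bq * s * / (a * a)) by (field; lra).
    apply Rmult_le_compat_r; [left; apply Rinv_0_lt_compat; nra | apply beta_sq_le]. }
  assert (Hfk : f k * f k <= 2 * (u * u) + 2 * (b * b)).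
  { replace (f k) with (u - b) by (unfold u; ring).
    assert (0 <= (u + b) * (u + b)) by apply Rle_0_sqr.
    replace ((u - b) * (u - b)) with (2 * (u * u) + 2 * (b * b) - (u + b) * (u + b)) by ring.
    lra. }
  assert (Hsq : sqnorm (S k) f <= K * s + 2 * (u * u))
    by (change (sqnorm (S k) f) with (s + f k * f k); unfold K; lra).
  assert (Huu : 0 <= u * u) by apply Rle_0_sqr.
  apply Rle_trans with (m * (K * s + 2 * (u * u))); [apply Rmult_le_compat_l; lra |].
  replace (a * (f k + beta f / a) ^ 2) with (a * (u * u)) by (unfold u, b; ring).
  nra.
Qed.

End PSDForm.

Lemma psd_kernel_or_coercive : forall k Q,
  (forall i j, (i < k)%nat -> (j < k)%nat -> Q i j = Q j i) ->
  (forall f, 0 <= qform k Q f) ->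
  (exists f, (exists i, (i < k)%nat /\ f i <> 0) /\
             forall i, (i < k)%nat -> rsum k (fun j => Q i j * f j) = 0)
  \/ (exists delta, 0 < delta /\ forall f, delta * sqnorm k f <= qform k Q f).
Proof.
  induction k; intros Q HS HP.
  - right. exists 1. split; [lra |]. intros. unfold sqnorm, qform. simpl. lra.
  - assert (Ha : 0 <= Q k k) by (rewrite <- (qform_delta (S k) Q k) by lia; apply HP).
    destruct (Rle_lt_or_eq_dec _ _ Ha) as [Hapos | Ha0].
    + destruct (IHk (schur k Q) (schur_sym k Q HS Hapos) (schur_psd k Q HS HP Hapos))
        as [[y [[i0 [Hi0 Hy0]] Hker]] | [dl [Hdl Hdom]]].
      * left.
        exists (fun j => if Nat.eqb j k then - rsum k (fun j => Q k j * y j) / Q k k else y j).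
        split; [| exact (schur_kernel_extend k Q Hapos y Hker)].
        exists i0. destruct (Nat.eqb_spec i0 k); [lia | auto].
      * right. exact (schur_coercive_lift k Q HS Hapos dl Hdl Hdom).
    + left. exists (fun j => if Nat.eqb j k then 1 else 0). split.
      * exists k. rewrite Nat.eqb_refl. split; [lia | lra].
      * intros i Hi.
        rewrite (rsum_ext (S k) _ (fun j => if Nat.eqb j k then Q i j else 0)), rsum_delta
          by (auto; intros j Hj; destruct (Nat.eqb j k); lra).
        destruct (Nat.eq_dec i k) as [-> | Hik]; [auto |].
        rewrite HS by lia. apply (psd_zero_diag_row k Q HS HP); auto; lia.
Qed.

Lemma least_rayleigh_bound : forall k Q K, (0 < k)%nat ->
  (forall f, qform k Q f <= K * sqnorm k f) ->
  exists M, (forall f, qform k Q f <= M * sqnorm k f) /\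
    forall M', (forall f, qform k Q f <= M' * sqnorm k f) -> M <= M'.
Proof.
  intros k Q K Hk HK.
  set (E := fun mu => exists f, 0 < sqnorm k f /\ mu * sqnorm k f <= qform k Q f).
  assert (Hbound : bound E).
  { exists K. intros mu [f [Hf Hmu]]. specialize (HK f).
    apply (Rmult_le_reg_r (sqnorm k f)); lra. }
  assert (Hne : E (Q 0%nat 0%nat)).
  { exists (fun j => if Nat.eqb j 0 then 1 else 0).
    rewrite sqnorm_delta, qform_delta by auto. lra. }
  destruct (completeness E Hbound (ex_intro _ _ Hne)) as [M [HMub HMlub]].
  exists M. split.
  - intros f. destruct (Rle_lt_or_eq_dec _ _ (sqnorm_nonneg k f)) as [Hf | Hf].
    + assert (Hr : E (qform k Q f / sqnorm k f)) by (exists f; split; [auto | right; field; lra]).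
      apply HMub, (Rmult_le_compat_r (sqnorm k f)) in Hr; [| lra].
      replace (qform k Q f / sqnorm k f * sqnorm k f) with (qform k Q f) in Hr by (field; lra).
      lra.
    + specialize (HK f). rewrite <- Hf in HK |- *. lra.
  - intros M' HM'. apply HMlub. intros mu [f [Hf Hmu]]. specialize (HM' f).
    apply (Rmult_le_reg_r (sqnorm k f)); lra.
Qed.

Definition diag_minus (k : nat) (M : R) (Q : nat -> nat -> R) (i j : nat) : R :=
  (if Nat.eqb i j then M else 0) - Q i j.

Lemma diag_minus_apply : forall k M Q f i, (i < k)%nat ->
  rsum k (fun j => diag_minus k M Q i j * f j) = M * f i - rsum k (fun j => Q i j * f j).
Proof.
  intros k M Q f i Hi. unfold diag_minus.
  rewrite (rsum_ext k _ (fun j => (if Nat.eqb j i then M * f j else 0) - Q i j * f j)).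
  - rewrite rsum_minus, (rsum_delta k i (fun j => M * f j)) by auto. reflexivity.
  - intros j Hj. rewrite Nat.eqb_sym. destruct (Nat.eqb j i); ring.
Qed.

Lemma qform_diag_minus : forall k M Q f,
  qform k (diag_minus k M Q) f = M * sqnorm k f - qform k Q f.
Proof.
  intros. unfold qform at 1.
  rewrite (rsum_ext k _ (fun i => M * (f i * f i) - f i * rsum k (fun j => Q i j * f j)))
    by (intros; rewrite diag_minus_apply by auto; ring).
  rewrite rsum_minus, rsum_scal_l. reflexivity.
Qed.

Lemma rayleigh_max_eigenvector : forall k Q K, (0 < k)%nat ->
  (forall i j, (i < k)%nat -> (j < k)%nat -> Q i j = Q j i) ->
  (forall f, qform k Q f <= K * sqnorm k f) ->
  exists M f, (forall g, qform k Q g <= M * sqnorm k g) /\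
    (exists i, (i < k)%nat /\ f i <> 0) /\
    forall i, (i < k)%nat -> rsum k (fun j => Q i j * f j) = M * f i.
Proof.
  intros k Q K Hk HS HK.
  destruct (least_rayleigh_bound k Q K Hk HK) as [M [HQM HMleast]].
  assert (Hsym : forall i j, (i < k)%nat -> (j < k)%nat ->
                 diag_minus k M Q i j = diag_minus k M Q j i)
    by (intros; unfold diag_minus; rewrite Nat.eqb_sym, HS; auto).
  assert (Hpsd : forall f, 0 <= qform k (diag_minus k M Q) f)
    by (intros f; rewrite qform_diag_minus; specialize (HQM f); lra).
  destruct (psd_kernel_or_coercive k _ Hsym Hpsd) as [[f [Hf Hker]] | [dl [Hdl Hdom]]].
  - exists M, f. repeat split; auto.
    intros i Hi. specialize (Hker i Hi). rewrite diag_minus_apply in Hker by auto. lra.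
  - (* otherwise M - dl would be a smaller bound *)
    assert (M <= M - dl); [| lra].
    apply HMleast. intros f. specialize (Hdom f). rewrite qform_diag_minus in Hdom. lra.
Qed.

Lemma mat_apply_lin : forall n P f g c x,
  mat_apply n P (fun y => f y + c * g y) x = mat_apply n P f x + c * mat_apply n P g x.
Proof.
  intros. unfold mat_apply.
  rewrite (rsum_ext n _ (fun y => P x y * f y + c * (P x y * g y))) by (intros; ring).
  rewrite rsum_plus, rsum_scal_l. reflexivity.
Qed.

Lemma mean_zero_eigen_of_square : forall n P f M, 0 < M ->
  (exists x, (x < n)%nat /\ f x <> 0) ->
  (forall x, (x < n)%nat -> mat_apply n P (mat_apply n P f) x = M * f x) ->
  rsum n f = 0 -> rsum n (mat_apply n P f) = 0 ->
  exists lam h, Rabs lam = sqrt M /\ (exists x, (x < n)%nat /\ h x <> 0) /\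
    (forall x, (x < n)%nat -> mat_apply n P h x = lam * h x) /\ rsum n h = 0.
Proof.
  intros n P f M HM Hf Heig Hf0 HPf0.
  set (mu := sqrt M).
  assert (Hmu2 : mu * mu = M) by (apply sqrt_sqrt; lra).
  assert (Hmu : 0 < mu) by (apply sqrt_lt_R0; lra).
  (* P^2 - M = (P - mu)(P + mu): either P f + mu f is a mu-eigenvector or f is a (-mu)-one *)
  set (g := fun x => mat_apply n P f x + mu * f x).
  destruct (classic (exists x, (x < n)%nat /\ g x <> 0)) as [Hg | Hg].
  - exists mu, g. repeat split; auto.
    + apply Rabs_right. lra.
    + intros x Hx. unfold g at 1. rewrite mat_apply_lin, Heig by auto. unfold g. nra.
    + unfold g. rewrite rsum_plus, rsum_scal_l, Hf0, HPf0. ring.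
  - exists (- mu), f. repeat split; auto.
    + rewrite Rabs_Ropp. apply Rabs_right. lra.
    + intros x Hx. destruct (Req_dec (g x) 0) as [Hgx | Hgx].
      * unfold g in Hgx. lra.
      * exfalso. apply Hg. eauto.
Qed.

(** * Elementary real estimates *)

Lemma exp_le : forall x y, x <= y -> exp x <= exp y.
Proof. intros x y [H | ->]; [left; apply exp_increasing |]; lra. Qed.

Lemma exp_tangent_le : forall z y, exp z * (1 + y - z) <= exp y.
Proof.
  intros. replace y with (z + (y - z)) at 2 by ring. rewrite exp_plus.
  assert (H := exp_ineq1_le (y - z)). assert (0 < exp z) by apply exp_pos. nra.
Qed.

(* The perspective of h |-> exp (- L h): convex and positively homogeneous in (p, h),
   hence subadditive, which is the form of Jensen's inequality used for the killed walk. *)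
Definition exp_persp (L p h : R) : R := if Rlt_dec 0 p then p * exp (- (L * h / p)) else 0.

Lemma exp_persp_nonneg : forall L p h, 0 <= exp_persp L p h.
Proof.
  intros. unfold exp_persp. destruct (Rlt_dec 0 p); [| lra].
  assert (0 < exp (- (L * h / p))) by apply exp_pos. nra.
Qed.

Lemma exp_persp_subadd : forall L p1 p2 h1 h2, 0 <= L -> 0 <= p1 -> 0 <= p2 -> 0 <= h1 -> 0 <= h2 ->
  exp_persp L (p1 + p2) (h1 + h2) <= exp_persp L p1 h1 + exp_persp L p2 h2.
Proof.
  intros L p1 p2 h1 h2 HL Hp1 Hp2 Hh1 Hh2. unfold exp_persp.
  destruct (Rlt_dec 0 p1) as [q1 | q1]; destruct (Rlt_dec 0 p2) as [q2 | q2];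
    destruct (Rlt_dec 0 (p1 + p2)) as [q | q]; try lra.
  - (* tangent lines of exp at the common point z *)
    set (z := - (L * (h1 + h2) / (p1 + p2))).
    assert (T1 := exp_tangent_le z (- (L * h1 / p1))).
    assert (T2 := exp_tangent_le z (- (L * h2 / p2))).
    assert (E : p1 * (1 + - (L * h1 / p1) - z) + p2 * (1 + - (L * h2 / p2) - z) = p1 + p2)
      by (unfold z; field; lra).
    apply (Rmult_le_compat_l p1) in T1; [| lra]. apply (Rmult_le_compat_l p2) in T2; [| lra].
    assert (p1 * (exp z * (1 + - (L * h1 / p1) - z)) + p2 * (exp z * (1 + - (L * h2 / p2) - z))
            = (p1 + p2) * exp z) by (rewrite <- E; ring).
    lra.
  - replace p2 with 0 by lra. rewrite Rplus_0_r.
    assert (exp (- (L * (h1 + h2) / p1)) <= exp (- (L * h1 / p1))).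
    { apply exp_le, Ropp_le_contravar. unfold Rdiv.
      apply Rmult_le_compat_r; [left; apply Rinv_0_lt_compat |]; nra. }
    nra.
  - replace p1 with 0 by lra. rewrite Rplus_0_l.
    assert (exp (- (L * (h1 + h2) / p2)) <= exp (- (L * h2 / p2))).
    { apply exp_le, Ropp_le_contravar. unfold Rdiv.
      apply Rmult_le_compat_r; [left; apply Rinv_0_lt_compat |]; nra. }
    nra.
Qed.

Lemma exp_persp_scale : forall L c p h, 0 <= c -> exp_persp L (c * p) (c * h) = c * exp_persp L p h.
Proof.
  intros. unfold exp_persp.
  destruct (Rlt_dec 0 (c * p)); destruct (Rlt_dec 0 p).
  - replace (L * (c * h) / (c * p)) with (L * h / p) by (field; split; nra). ring.
  - exfalso. nra.
  - destruct (Req_dec c 0) as [-> |]; [ring | exfalso; nra].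
  - ring.
Qed.

Lemma exp_persp_rsum_le : forall L k c p h, 0 <= L ->
  (forall i, (i < k)%nat -> 0 <= c i /\ 0 <= p i /\ 0 <= h i) ->
  exp_persp L (rsum k (fun i => c i * p i)) (rsum k (fun i => c i * h i))
  <= rsum k (fun i => c i * exp_persp L (p i) (h i)).
Proof.
  induction k; intros c p h HL H; simpl.
  - unfold exp_persp. destruct (Rlt_dec 0 0); lra.
  - destruct (H k ltac:(lia)) as [Hc [Hp Hh]].
    assert (IH := IHk c p h HL (fun i Hi => H i ltac:(lia))).
    assert (0 <= rsum k (fun i => c i * p i))
      by (apply rsum_nonneg; intros i Hi; destruct (H i ltac:(lia)) as [? [? ?]]; nra).
    assert (0 <= rsum k (fun i => c i * h i))
      by (apply rsum_nonneg; intros i Hi; destruct (H i ltac:(lia)) as [? [? ?]]; nra).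
    eapply Rle_trans; [apply exp_persp_subadd; auto; nra |].
    rewrite exp_persp_scale by auto. lra.
Qed.

Lemma exp_persp_shift : forall L p h, 0 <= p -> exp (- L) * exp_persp L p h = exp_persp L p (h + p).
Proof.
  intros. unfold exp_persp. destruct (Rlt_dec 0 p); [| ring].
  replace (- (L * (h + p) / p)) with (- (L * h / p) + - L) by (field; lra).
  rewrite exp_plus. ring.
Qed.

Lemma exp_persp_ge : forall L B a p h, 0 <= L -> 0 <= B -> 0 < a ->
  a / 2 <= p -> 0 <= h <= B * a -> a / 2 * exp (- (2 * L * B)) <= exp_persp L p h.
Proof.
  intros L B a p h HL HB Ha Hp Hh. unfold exp_persp.
  destruct (Rlt_dec 0 p) as [Hp0 | Hp0]; [| lra].
  assert (Hhp : h / p <= 2 * B).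
  { apply (Rmult_le_reg_r p); [lra |]. replace (h / p * p) with h by (field; lra). nra. }
  assert (exp (- (2 * L * B)) <= exp (- (L * h / p))).
  { apply exp_le, Ropp_le_contravar.
    replace (L * h / p) with (L * (h / p)) by (field; lra). nra. }
  assert (0 < exp (- (2 * L * B))) by apply exp_pos.
  apply Rmult_le_compat; lra.
Qed.

Definition kill_rate (d : nat) : R := - ln (INR d / INR (S d)).

Lemma exp_kill_rate : forall d, (0 < d)%nat -> exp (- kill_rate d) = INR d / INR (S d).
Proof.
  intros. unfold kill_rate. rewrite Ropp_involutive.
  apply exp_ln, Rdiv_lt_0_compat; apply lt_0_INR; lia.
Qed.

Lemma kill_rate_nonneg : forall d, (0 < d)%nat -> 0 <= kill_rate d.
Proof.
  intros d Hd. unfold kill_rate.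
  assert (0 < INR d) by (apply lt_0_INR; lia). rewrite S_INR.
  assert (INR d / (INR d + 1) < 1) by (apply (Rmult_lt_reg_r (INR d + 1)); [lra |];
    unfold Rdiv; rewrite Rmult_assoc, Rinv_l; lra).
  enough (ln (INR d / (INR d + 1)) < ln 1) by (rewrite ln_1 in *; lra).
  apply ln_increasing; [apply Rdiv_lt_0_compat |]; lra.
Qed.

Lemma geom_sum : forall r t, rsum t (fun s => r ^ s) * (1 - r) = 1 - r ^ t.
Proof. induction t; simpl; [ring | rewrite Rmult_plus_distr_r, IHt; ring]. Qed.

Lemma geom_sum_rev : forall r t, rsum t (fun s => r ^ (t - s)) * (1 - r) = r - r ^ S t.
Proof.
  induction t; [simpl; ring |]. cbn [rsum]. replace (S t - t)%nat with 1%nat by lia.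
  rewrite (rsum_ext t (fun s => r ^ (S t - s)) (fun s => r * r ^ (t - s))), rsum_scal_l
    by (intros; replace (S t - i)%nat with (S (t - i)) by lia; reflexivity).
  replace ((r * rsum t (fun s => r ^ (t - s)) + r ^ 1) * (1 - r))
    with (r * (rsum t (fun s => r ^ (t - s)) * (1 - r)) + r * (1 - r)) by ring.
  rewrite IHt. simpl. ring.
Qed.

Lemma pow_le_inv_sq : forall r (n t : nat), 0 < r < 1 -> (2 <= n)%nat ->
  2 / (- ln r) * ln (INR n) <= INR t -> r ^ t <= / INR n * / INR n.
Proof.
  intros r n t Hr Hn Ht.
  assert (HnR : 1 < INR n) by (apply lt_1_INR; lia).
  assert (Hlnr : ln r < 0) by (rewrite <- ln_1; apply ln_increasing; lra).
  assert (Hlnn : 0 < ln (INR n)) by (rewrite <- ln_1; apply ln_increasing; lra).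
  assert (Hexp : INR t * ln r <= - (2 * ln (INR n))).
  { apply (Rmult_le_compat_r (- ln r)) in Ht; [| lra].
    replace (2 / - ln r * ln (INR n) * - ln r) with (2 * ln (INR n)) in Ht by (field; lra). lra. }
  rewrite <- Rpower_pow by lra. unfold Rpower.
  replace (/ INR n * / INR n) with (exp (- (2 * ln (INR n)))).
  - apply exp_le. lra.
  - replace (- (2 * ln (INR n))) with (- ln (INR n) + - ln (INR n)) by ring.
    rewrite exp_plus, exp_Ropp, exp_ln by lra. reflexivity.
Qed.

(** * Walks with a general kernel *)

Fixpoint tpow (n : nat) (P : nat -> nat -> R) (u t w : nat) : R :=
  match t with
  | O => if Nat.eqb w u then 1 else 0
  | S s => rsum n (fun x => P x w * tpow n P u s x)
  end.

Lemma tpow_nonneg : forall n P u t w, (forall x y, 0 <= P x y) -> 0 <= tpow n P u t w.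
Proof.
  induction t; intros; simpl; [destruct (Nat.eqb w u); lra |].
  apply rsum_nonneg. intros. apply Rmult_le_pos; auto.
Qed.

(* visits n P v u t w = E_u[#{s < t | X_s = v}; X_t = w] for the walk with kernel P *)
Fixpoint visits (n : nat) (P : nat -> nat -> R) (v u t w : nat) : R :=
  match t with
  | O => 0
  | S s => rsum n (fun x =>
      P x w * (visits n P v u s x + if Nat.eqb x v then tpow n P u s x else 0))
  end.

Lemma visits_nonneg : forall n P v u t w, (forall x y, 0 <= P x y) -> 0 <= visits n P v u t w.
Proof.
  induction t; intros; simpl; [lra |].
  apply rsum_nonneg. intros. apply Rmult_le_pos; auto.
  assert (0 <= visits n P v u t i) by auto.
  assert (0 <= tpow n P u t i) by (apply tpow_nonneg; auto).
  destruct (Nat.eqb i v); lra.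
Qed.

Lemma visits_closed : forall n P v u t w, (v < n)%nat ->
  visits n P v u t w = rsum t (fun s => tpow n P u s v * tpow n P v (t - s) w).
Proof.
  intros n P v u t w Hv. revert w. induction t; intros w; [reflexivity |]. cbn [visits].
  rewrite (rsum_ext n _ (fun x => P x w * visits n P v u t x
                                  + (if Nat.eqb x v then P x w * tpow n P u t x else 0)))
    by (intros x Hx; destruct (Nat.eqb x v); ring).
  rewrite rsum_plus, (rsum_delta n v (fun x => P x w * tpow n P u t x)) by auto.
  cbn [rsum]. replace (S t - t)%nat with 1%nat by lia.
  replace (tpow n P v 1 w) with (P v w).
  2: { simpl. rewrite (rsum_ext n _ (fun x => if Nat.eqb x v then P x w else 0)).
       - symmetry. apply (rsum_delta n v (fun x => P x w)); auto.
       - intros. destruct (Nat.eqb i v); ring. }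
  f_equal; [| ring].
  rewrite (rsum_ext n _ (fun x =>
             rsum t (fun s => tpow n P u s v * (P x w * tpow n P v (t - s) x))))
    by (intros x Hx; rewrite IHt, <- rsum_scal_l; apply rsum_ext; intros; ring).
  rewrite rsum_swap. apply rsum_ext. intros s Hs. rewrite rsum_scal_l.
  replace (S t - s)%nat with (S (t - s)) by lia. reflexivity.
Qed.

Lemma spectral_gap_mono : forall n d adj rho1 rho2, rho1 <= rho2 ->
  spectral_gap n d adj rho1 -> spectral_gap n d adj rho2.
Proof.
  intros n d adj rho1 rho2 Hr [Hconst Hgap]. split; auto.
  intros. assert (Rabs lam <= rho1) by (eapply Hgap; eauto). lra.
Qed.

Lemma Rabs_le_bounds : forall x a, Rabs x <= a -> - a <= x <= a.
Proof. intros x a H. unfold Rabs in H. destruct (Rcase_abs x); lra. Qed.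

(** * Random walk on a regular expander *)

Section RegularGraph.

Variables (n d : nat) (adj : nat -> nat -> bool).
Hypothesis n_pos : (0 < n)%nat.
Hypothesis d_pos : (0 < d)%nat.
Hypothesis regular : is_d_regular_simple n d adj.

Local Notation P := (transGn n d adj).

Lemma transGn_nonneg : forall x y, 0 <= P x y.
Proof.
  intros. unfold transGn. destruct (adj x y); [| lra].
  left. apply Rinv_0_lt_compat, lt_0_INR. auto.
Qed.

Lemma transGn_sym : forall x y, (x < n)%nat -> (y < n)%nat -> P x y = P y x.
Proof. intros x y Hx Hy. unfold transGn. rewrite (proj1 regular); auto. Qed.

Lemma transGn_row_sum : forall x, (x < n)%nat -> rsum n (fun y => P x y) = 1.
Proof.
  intros x Hx. unfold transGn. rewrite rsum_indicator, (proj2 (proj2 regular)) by auto.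
  field. apply not_0_INR. lia.
Qed.

Lemma transGn_col_sum : forall y, (y < n)%nat -> rsum n (fun x => P x y) = 1.
Proof.
  intros y Hy. rewrite <- (transGn_row_sum y) by auto.
  apply rsum_ext. intros. apply transGn_sym; auto.
Qed.

Lemma rsum_mat_apply : forall f, rsum n (mat_apply n P f) = rsum n f.
Proof.
  intros. unfold mat_apply. rewrite rsum_swap.
  apply rsum_ext. intros y Hy. rewrite rsum_scal_r, transGn_col_sum by auto. ring.
Qed.

Lemma mat_apply_selfadjoint : forall f g,
  rsum n (fun x => f x * mat_apply n P g x) = rsum n (fun x => mat_apply n P f x * g x).
Proof.
  intros. unfold mat_apply.
  rewrite (rsum_ext n _ (fun x => rsum n (fun y => f x * P x y * g y)))
    by (intros; rewrite <- rsum_scal_l; apply rsum_ext; intros; ring).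
  rewrite rsum_swap. apply rsum_ext. intros y Hy. rewrite <- rsum_scal_r.
  apply rsum_ext. intros x Hx. rewrite (transGn_sym x y) by auto. ring.
Qed.

Lemma sqnorm_mat_apply_le : forall f, sqnorm n (mat_apply n P f) <= sqnorm n f.
Proof.
  intros f. unfold sqnorm.
  apply Rle_trans with (rsum n (fun x => rsum n (fun y => P x y * f y * f y))).
  - apply rsum_le. intros x Hx.
    assert (W := rsum_cauchy_schwarz n (fun y => P x y) (fun _ => 1) f
                   (fun i _ => transGn_nonneg x i)). cbv beta in W.
    rewrite (rsum_ext n (fun i => P x i * 1 * f i) (fun y => P x y * f y)),
      (rsum_ext n (fun i => P x i * 1 * 1) (fun y => P x y)), transGn_row_sum in W
      by (auto; intros; ring).
    unfold mat_apply. lra.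
  - rewrite rsum_swap. apply Req_le. apply rsum_ext. intros y Hy.
    rewrite (rsum_ext n _ (fun x => P x y * (f y * f y))), rsum_scal_r, transGn_col_sum
      by (auto; intros; ring).
    ring.
Qed.

(* P^2 minus the orthogonal projection onto the constants *)
Definition centered_sq_trans (x y : nat) : R :=
  rsum n (fun z => P x z * P z y) - / INR n.

Lemma centered_sq_trans_sym : forall x y, (x < n)%nat -> (y < n)%nat ->
  centered_sq_trans x y = centered_sq_trans y x.
Proof.
  intros. unfold centered_sq_trans. f_equal.
  apply rsum_ext. intros z Hz. rewrite (transGn_sym x z), (transGn_sym z y) by auto. ring.
Qed.

Lemma centered_sq_trans_apply : forall f x,
  rsum n (fun y => centered_sq_trans x y * f y)
  = mat_apply n P (mat_apply n P f) x - rsum n f / INR n.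
Proof.
  intros. unfold centered_sq_trans, mat_apply.
  rewrite (rsum_ext n _ (fun y => rsum n (fun z => P x z * P z y * f y) - / INR n * f y))
    by (intros; rewrite rsum_scal_r; ring).
  rewrite rsum_minus, rsum_swap, rsum_scal_l. unfold Rdiv. rewrite Rmult_comm. f_equal.
  apply rsum_ext. intros z Hz. rewrite <- rsum_scal_l. apply rsum_ext. intros. ring.
Qed.

Lemma qform_centered_sq_trans : forall f,
  qform n centered_sq_trans f = sqnorm n (mat_apply n P f) - (rsum n f) ^ 2 / INR n.
Proof.
  intros. unfold qform.
  rewrite (rsum_ext n _ (fun x =>
             f x * mat_apply n P (mat_apply n P f) x - (rsum n f / INR n) * f x))
    by (intros; rewrite centered_sq_trans_apply; ring).
  rewrite rsum_minus, rsum_scal_l, mat_apply_selfadjoint. unfold sqnorm, Rdiv. ring.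
Qed.

Lemma spectral_gap_mean_zero : forall rho lam h, spectral_gap n d adj rho ->
  (exists x, (x < n)%nat /\ h x <> 0) -> rsum n h = 0 ->
  (forall x, (x < n)%nat -> mat_apply n P h x = lam * h x) -> Rabs lam <= rho.
Proof.
  intros rho lam h [Hconst Hgap] [x0 [Hx0 Hh0]] Hsum Heig.
  destruct (Req_dec lam 1) as [-> | Hlam]; [exfalso | eapply Hgap; eauto].
  assert (Hc : forall x, (x < n)%nat -> h x = h x0)
    by (intros; apply Hconst; auto; intros; rewrite Heig by auto; ring).
  rewrite (rsum_ext n h (fun _ => h x0)), rsum_const in Hsum by auto.
  apply Rmult_integral in Hsum as [Hn | Hn]; [| auto].
  apply (not_0_INR n); [lia | auto].
Qed.

Lemma centered_sq_trans_eigenvalue_le : forall rho M f, spectral_gap n d adj rho ->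
  (exists x, (x < n)%nat /\ f x <> 0) ->
  (forall x, (x < n)%nat -> rsum n (fun y => centered_sq_trans x y * f y) = M * f x) ->
  M <= rho ^ 2.
Proof.
  intros rho M f Hsg Hf Heig.
  destruct (Rle_dec M (rho ^ 2)) as [| Hgt]; auto. exfalso.
  assert (HM0 : 0 < M) by (assert (0 <= rho ^ 2) by apply pow2_ge_0; lra).
  assert (Heig' : forall x, (x < n)%nat ->
    mat_apply n P (mat_apply n P f) x - rsum n f / INR n = M * f x)
    by (intros; rewrite <- centered_sq_trans_apply; auto).
  assert (Hsum : rsum n f = 0).
  { assert (H1 := rsum_ext n _ _ Heig').
    rewrite rsum_minus, rsum_scal_l, rsum_const, !rsum_mat_apply in H1.
    replace (INR n * (rsum n f / INR n)) with (rsum n f) in H1 by (field; apply not_0_INR; lia).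
    assert (HMs : M * rsum n f = 0) by lra.
    apply Rmult_integral in HMs as [HMs | HMs]; lra. }
  assert (Heig2 : forall x, (x < n)%nat -> mat_apply n P (mat_apply n P f) x = M * f x)
    by (intros x Hx; rewrite <- Heig' by auto; rewrite Hsum; unfold Rdiv; ring).
  destruct (mean_zero_eigen_of_square n P f M HM0 Hf Heig2 Hsum
              (eq_trans (rsum_mat_apply f) Hsum)) as [lam [h [Hlam [Hh [Heigh Hsumh]]]]].
  assert (Hl := spectral_gap_mean_zero rho lam h Hsg Hh Hsumh Heigh).
  rewrite Hlam in Hl. assert (sqrt M * sqrt M = M) by (apply sqrt_sqrt; lra).
  assert (0 <= sqrt M) by apply sqrt_pos. nra.
Qed.

Lemma mean_zero_contraction : forall rho, spectral_gap n d adj rho -> 0 <= rho ->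
  forall f, rsum n f = 0 -> sqnorm n (mat_apply n P f) <= rho ^ 2 * sqnorm n f.
Proof.
  intros rho Hsg Hrho.
  assert (Hle1 : forall f, qform n centered_sq_trans f <= 1 * sqnorm n f).
  { intros f. rewrite qform_centered_sq_trans. assert (H := sqnorm_mat_apply_le f).
    assert (0 <= (rsum n f) ^ 2 / INR n)
      by (apply Rmult_le_pos; [apply pow2_ge_0 | left; apply Rinv_0_lt_compat, lt_0_INR; auto]).
    lra. }
  destruct (rayleigh_max_eigenvector n centered_sq_trans 1 n_pos centered_sq_trans_sym Hle1)
    as [M [f [HM [Hf Heig]]]].
  assert (HMrho := centered_sq_trans_eigenvalue_le rho M f Hsg Hf Heig).
  intros g Hg. specialize (HM g).
  rewrite qform_centered_sq_trans, Hg in HM.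
  assert (0 <= sqnorm n g) by apply sqnorm_nonneg.
  replace (0 ^ 2 / INR n) with 0 in HM by (unfold Rdiv; ring). nra.
Qed.

Lemma tpow_sum : forall u t, (u < n)%nat -> rsum n (tpow n P u t) = 1.
Proof.
  induction t; intros Hu; simpl.
  - apply (rsum_delta n u (fun _ => 1)); auto.
  - rewrite rsum_swap, <- (IHt Hu). apply rsum_ext. intros x Hx.
    rewrite rsum_scal_r, transGn_row_sum by auto. ring.
Qed.

Lemma tpow_mixing : forall rho u t w, spectral_gap n d adj rho -> 0 <= rho ->
  (u < n)%nat -> (w < n)%nat -> Rabs (tpow n P u t w - / INR n) <= rho ^ t.
Proof.
  intros rho u t0 w0 Hsg Hrho Hu Hw0.
  set (f := fun t w => tpow n P u t w - / INR n).
  assert (HnR : INR n <> 0) by (apply not_0_INR; lia).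
  assert (Hf0 : forall t, rsum n (f t) = 0)
    by (intros; unfold f; rewrite rsum_minus, rsum_const, tpow_sum by auto; field; auto).
  assert (Hstep : forall t w, (w < n)%nat -> f (S t) w = mat_apply n P (f t) w).
  { intros t w Hw. unfold f, mat_apply. simpl.
    rewrite (rsum_ext n (fun y => P w y * (tpow n P u t y - / INR n))
               (fun y => P y w * tpow n P u t y - / INR n * P w y))
      by (intros; rewrite (transGn_sym w) by auto; ring).
    rewrite rsum_minus, rsum_scal_l, transGn_row_sum by auto. ring. }
  assert (Hsq : forall t, sqnorm n (f t) <= (rho ^ t) ^ 2).
  { induction t.
    - (* ||e_u - 1/n||^2 = 1 - 1/n *)
      unfold sqnorm. rewrite (rsum_ext n (fun i => f 0%nat i * f 0%nat i)
        (fun i => (if Nat.eqb i u then f 0%nat i else 0) - / INR n * f 0%nat i)).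
      + rewrite rsum_minus, rsum_scal_l, Hf0, (rsum_delta n u (f 0%nat)) by auto.
        unfold f. simpl. rewrite Nat.eqb_refl.
        assert (0 < / INR n) by (apply Rinv_0_lt_compat, lt_0_INR; lia). lra.
      + intros i Hi. unfold f at 1. simpl. destruct (Nat.eqb i u); ring.
    - rewrite (sqnorm_ext n (f (S t)) (mat_apply n P (f t))) by auto.
      apply Rle_trans with (rho ^ 2 * sqnorm n (f t)); [apply mean_zero_contraction; auto |].
      replace ((rho ^ S t) ^ 2) with (rho ^ 2 * (rho ^ t) ^ 2) by (simpl; ring).
      apply Rmult_le_compat_l; [apply pow2_ge_0 | auto]. }
  assert (Hpt : f t0 w0 * f t0 w0 <= sqnorm n (f t0))
    by (apply (rsum_term_le n (fun i => f t0 i * f t0 i)); auto; intros; apply Rle_0_sqr).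
  rewrite <- (Rabs_pos_eq (rho ^ t0)) by (apply pow_le; auto).
  apply Rsqr_le_abs_0. unfold Rsqr. specialize (Hsq t0). fold (f t0 w0). nra.
Qed.

Variable v : nat.
Hypothesis v_lt : (v < n)%nat.

Lemma adjG_low : forall x y, (x < n)%nat -> (y < n)%nat -> adjG n adj v x y = adj x y.
Proof.
  intros x y Hx Hy. unfold adjG.
  rewrite (proj2 (Nat.ltb_lt x n)), (proj2 (Nat.ltb_lt y n)), (proj2 (Nat.eqb_neq y n)),
    (proj2 (Nat.eqb_neq x n)) by lia.
  simpl. rewrite !Bool.andb_false_r, !Bool.orb_false_r. reflexivity.
Qed.

Lemma degG_eq : forall x, (x < n)%nat -> degG n adj v x = (d + if Nat.eqb x v then 1 else 0)%nat.
Proof.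
  intros x Hx. unfold degG.
  rewrite ncount_S, (ncount_ext n _ (adj x)), (proj2 (proj2 regular))
    by (auto; intros; apply adjG_low; auto).
  f_equal. unfold adjG. rewrite Nat.ltb_irrefl, Nat.eqb_refl, (proj2 (Nat.eqb_neq x n)) by lia.
  rewrite !Bool.andb_false_r. destruct (Nat.eqb x v); reflexivity.
Qed.

Lemma transG_eq : forall x w, (x < n)%nat -> (w < n)%nat ->
  transG n adj v x w = (if Nat.eqb x v then INR d / INR (S d) else 1) * P x w.
Proof.
  intros x w Hx Hw. unfold transG, transGn. rewrite adjG_low, degG_eq by auto.
  assert (INR d <> 0) by (apply not_0_INR; lia).
  assert (INR (S d) <> 0) by (apply not_0_INR; lia).
  destruct (Nat.eqb x v); destruct (adj x w); rewrite ?Nat.add_0_r; try ring.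
  replace (d + 1)%nat with (S d) by lia. field. auto.
Qed.

Lemma walk_avoid_ge_exp_persp : forall u t w, (w < n)%nat ->
  exp_persp (kill_rate d) (tpow n P u t w) (visits n P v u t w) <= walk_avoid n adj v u t w.
Proof.
  intros u t. induction t; intros w Hw.
  - simpl. unfold exp_persp. destruct (Nat.eqb w u); destruct (Rlt_dec 0 1); destruct (Rlt_dec 0 0);
      try lra.
    replace (- (kill_rate d * 0 / 1)) with 0 by field. rewrite exp_0. lra.
  - simpl. eapply Rle_trans; [apply exp_persp_rsum_le |].
    + apply kill_rate_nonneg; auto.
    + intros i Hi. repeat split; [apply transGn_nonneg | apply tpow_nonneg, transGn_nonneg |].
      assert (0 <= visits n P v u t i) by (apply visits_nonneg, transGn_nonneg).
      assert (0 <= tpow n P u t i) by (apply tpow_nonneg, transGn_nonneg).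
      destruct (Nat.eqb i v); lra.
    + apply rsum_le. intros x Hx. rewrite transG_eq by auto.
      assert (IH := IHt x Hx). assert (Hpx := transGn_nonneg x w).
      destruct (Nat.eqb_spec x v).
      * rewrite <- exp_persp_shift, exp_kill_rate by (auto; apply tpow_nonneg, transGn_nonneg).
        assert (0 < INR d / INR (S d)) by (apply Rdiv_lt_0_compat; apply lt_0_INR; lia).
        assert (0 <= exp_persp (kill_rate d) (tpow n P u t x) (visits n P v u t x))
          by apply exp_persp_nonneg.
        apply Rmult_le_compat_l with (r := P x w) in IH; auto. nra.
      * rewrite Rplus_0_r. nra.
Qed.

Lemma visits_le : forall rho u t w, spectral_gap n d adj rho -> 0 <= rho < 1 ->
  (u < n)%nat -> (w < n)%nat ->
  visits n P v u t w <= INR t * (/ INR n * / INR n) + 2 * / INR n * / (1 - rho) + INR t * rho ^ t.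
Proof.
  intros rho u t w Hsg Hrho Hu Hw. rewrite visits_closed by auto.
  set (a := / INR n).
  apply Rle_trans with (rsum t (fun s => (a + rho ^ s) * (a + rho ^ (t - s)))).
  - apply rsum_le. intros s Hs.
    assert (M1 := Rabs_le_bounds _ _ (tpow_mixing rho u s v Hsg (proj1 Hrho) Hu v_lt)).
    assert (M2 := Rabs_le_bounds _ _ (tpow_mixing rho v (t - s) w Hsg (proj1 Hrho) v_lt Hw)).
    assert (0 <= tpow n P u s v) by (apply tpow_nonneg, transGn_nonneg).
    assert (0 <= tpow n P v (t - s) w) by (apply tpow_nonneg, transGn_nonneg).
    apply Rmult_le_compat; auto; unfold a; lra.
  - rewrite (rsum_ext t _ (fun s => a * a + a * rho ^ s + a * rho ^ (t - s) + rho ^ t))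
      by (intros s Hs; replace (rho ^ t) with (rho ^ s * rho ^ (t - s))
            by (rewrite <- pow_add; f_equal; lia); ring).
    rewrite !rsum_plus, !rsum_scal_l, !rsum_const.
    assert (Ha : 0 <= a) by (left; apply Rinv_0_lt_compat, lt_0_INR; lia).
    assert (0 <= rho ^ t) by (apply pow_le; lra).
    assert (0 <= rho ^ S t) by (apply pow_le; lra).
    assert (G1 : rsum t (fun s => rho ^ s) <= / (1 - rho)).
    { apply (Rmult_le_reg_r (1 - rho)); [lra |]. rewrite geom_sum, Rinv_l; lra. }
    assert (G2 : rsum t (fun s => rho ^ (t - s)) <= / (1 - rho)).
    { apply (Rmult_le_reg_r (1 - rho)); [lra |]. rewrite geom_sum_rev, Rinv_l; lra. }
    apply (Rmult_le_compat_l a) in G1, G2; auto.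
    change (rsum t (pow rho)) with (rsum t (fun s => rho ^ s)). lra.
Qed.

Lemma walk_avoid_lower_bound : forall r u t w,
  spectral_gap n d adj r -> 0 < r < 1 -> (2 <= n)%nat ->
  (u < n)%nat -> (w < n)%nat -> r ^ t <= / INR n * / INR n -> (t <= n)%nat ->
  exp (- (2 * kill_rate d * (2 + 2 / (1 - r)))) / 2 / INR n <= walk_avoid n adj v u t w.
Proof.
  intros r u t w Hsg Hr Hn Hu Hw Hrt Htn.
  set (a := / INR n) in *. set (B := 2 + 2 / (1 - r)).
  assert (HnR : 2 <= INR n) by (replace 2 with (INR 2) by (simpl; ring); apply le_INR; auto).
  assert (Ha : 0 < a) by (apply Rinv_0_lt_compat; lra).
  assert (Han : INR n * a = 1) by (unfold a; field; lra).
  assert (Ha2 : a <= / 2) by (apply Rinv_le_contravar; lra).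
  assert (Hinv : 0 < / (1 - r)) by (apply Rinv_0_lt_compat; lra).
  (* t <= n and r^t <= 1/n^2 make both t/n^2 and t r^t at most 1/n *)
  assert (Hta : INR t * (a * a) <= a).
  { apply Rle_trans with (INR n * (a * a)); [apply Rmult_le_compat_r; [nra | apply le_INR; auto] |].
    replace (INR n * (a * a)) with (INR n * a * a) by ring. rewrite Han. lra. }
  assert (Htr : INR t * r ^ t <= a)
    by (eapply Rle_trans; [apply Rmult_le_compat_l; [apply pos_INR | apply Hrt] | apply Hta]).
  assert (Hp := Rabs_le_bounds _ _ (tpow_mixing r u t w Hsg (Rlt_le _ _ (proj1 Hr)) Hu Hw)).
  assert (Hvis := visits_le r u t w Hsg (conj (Rlt_le _ _ (proj1 Hr)) (proj2 Hr)) Hu Hw).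
  assert (0 <= visits n P v u t w) by (apply visits_nonneg, transGn_nonneg).
  eapply Rle_trans; [| apply walk_avoid_ge_exp_persp; auto].
  replace (exp (- (2 * kill_rate d * B)) / 2 / INR n) with (a / 2 * exp (- (2 * kill_rate d * B)))
    by (unfold a; field; lra).
  assert (HB : 0 <= B) by (unfold B, Rdiv; lra).
  assert (Haa : a * a <= a / 2) by nra.
  apply exp_persp_ge; [apply kill_rate_nonneg; auto | auto | auto | fold a in Hp; lra |].
  split; [auto |]. fold a in Hvis. unfold B, Rdiv. lra.
Qed.

End RegularGraph.

Theorem lemma3p2 :
  forall (d : nat) (rho : R), (3 <= d)%nat -> rho < 1 ->
  exists (C c : R) (eps : nat -> R),
    0 < C /\ 0 < c /\ Un_cv eps 0 /\
    exists N : nat, forall n : nat, (N <= n)%nat ->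
    forall adj : nat -> nat -> bool,
      is_d_regular_simple n d adj ->
      spectral_gap n d adj rho ->
      forall v : nat, (v < n)%nat ->
      forall u : nat, (u <= n)%nat -> u <> n ->
      exists Su : nat -> bool,
        INR (ncount (S n) Su) >= (1 - eps n) * INR n /\
        forall w : nat, (w <= n)%nat -> Su w = true ->
        forall t : nat, C * ln (INR n) <= INR t -> (t <= n)%nat ->
          walk_avoid n adj v u t w >= c / INR n.
Proof.
  intros d rho Hd Hrho.
  (* a positive spectral bound r >= rho is needed for ln r to make sense *)
  set (r := Rmax rho (1 / 2)).
  assert (Hr : 0 < r < 1) by (split; [apply Rlt_le_trans with (1 / 2); [lra | apply Rmax_r] |
                                        apply Rmax_lub_lt; lra]).
  assert (Hlnr : ln r < 0) by (rewrite <- ln_1; apply ln_increasing; lra).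
  exists (2 / (- ln r)), (exp (- (2 * kill_rate d * (2 + 2 / (1 - r)))) / 2), (fun _ => 0).
  split; [apply Rdiv_lt_0_compat; lra |].
  split; [apply Rdiv_lt_0_compat; [apply exp_pos | lra] |].
  split; [intros e He; exists 0%nat; intros; unfold R_dist; rewrite Rminus_0_r, Rabs_R0; auto |].
  exists 2%nat. intros n Hn adj Hreg Hsg v Hv u Hu Hun.
  exists (fun w => Nat.ltb w n). split; [rewrite ncount_ltb; lra |].
  intros w _ Hw t Ht Htn. apply Nat.ltb_lt in Hw. apply Rle_ge.
  apply (walk_avoid_lower_bound n d adj); auto; try lia.
  - apply spectral_gap_mono with rho; [apply Rmax_l | auto].
  - apply pow_le_inv_sq; auto.
Qed.
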